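(* Let $n\ge1$, $L_1,L_2,\underline b>0$, and let $(k_p,k_i,k_d)\in(0,\infty)^3$ satisfy $k_p^2>2k_ik_d+\bar k$ and $k_d^2>k_p/\underline b+\bar k$, where $\bar k=(L_1+L_2)(k_p+k_d)/\underline b$. Then the $3n\times3n$ matrix $$P=\begin{bmatrix}2k_ik_p\underline bI_n&2k_ik_d\underline bI_n&k_iI_n\\2k_ik_d\underline bI_n&(2k_pk_d\underline b-k_i)I_n&k_pI_n\\k_iI_n&k_pI_n&k_dI_n\end{bmatrix}$$ is positive definite. Moreover, there exists $\alpha>0$, depending only on $(k_p,k_i,k_d,L_1,L_2,\underline b)$, such that for all $n\times n$ real matrices $a,b,\theta$ with $\|a\|\le L_1$, $\|b\|\le L_2$ and $\mathrm{Sym}[\theta]\ge\underline bI_n$, the matrix $$A=\begin{bmatrix}0_n&I_n&0_n\\0_n&0_n&I_n\\-k_i\theta&a-k_p\theta&b-k_d\theta\end{bmatrix}$$ satisfies $PA+A^{\mathsf T}P\le-\alpha I_{3n}$.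
   Context: $\|\cdot\|$ is the operator norm induced by the Euclidean norm; $\mathrm{Sym}[\theta]=(\theta+\theta^{\mathsf T})/2$; for symmetric matrices, $S_1\ge S_2$ means $S_1-S_2$ is positive semidefinite; $0_n$ and $I_n$ are the $n\times n$ zero and identity matrices. *)

From HB Require Import structures.
From mathcomp Require Import all_boot all_order all_algebra.
From mathcomp Require Import classical_sets reals.
Set Implicit Arguments. Unset Strict Implicit. Unset Printing Implicit Defensive.
Import Order.TTheory GRing.Theory Num.Theory.
Local Open Scope ring_scope.
Local Open Scope classical_set_scope.

Section Defs.
Variable R : realType.

Definition vnorm (m : nat) (x : 'cV[R]_m) : R := Num.sqrt (\sum_i (x i 0) ^+ 2).

Definition opnorm (m : nat) (a : 'M[R]_m) : R :=
  sup [set vnorm (a *m x) | x in [set x : 'cV[R]_m | vnorm x <= 1]].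

Definition qform (m : nat) (S : 'M[R]_m) (x : 'cV[R]_m) : R := (x^T *m S *m x) 0 0.

Definition psd (m : nat) (S : 'M[R]_m) : Prop := forall x : 'cV[R]_m, 0 <= qform S x.
Definition posdef (m : nat) (S : 'M[R]_m) : Prop :=
  S^T = S /\ forall x : 'cV[R]_m, x != 0 -> 0 < qform S x.

Definition loewner_ge (m : nat) (S1 S2 : 'M[R]_m) : Prop := psd (S1 - S2).

Definition Sym (m : nat) (th : 'M[R]_m) : 'M[R]_m := 2^-1 *: (th + th^T).

Definition mx3 (n : nat) (A11 A12 A13 A21 A22 A23 A31 A32 A33 : 'M[R]_n)
  : 'M[R]_(n + n + n) :=
  block_mx (block_mx A11 A12 A21 A22) (col_mx A13 A23) (row_mx A31 A32) A33.

Definition kbar (L1 L2 bl kp kd : R) : R := (L1 + L2) * (kp + kd) / bl.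

Definition Pmat (n : nat) (kp ki kd bl : R) : 'M[R]_(n + n + n) :=
  mx3 (2 * ki * kp * bl)%:M (2 * ki * kd * bl)%:M ki%:M
      (2 * ki * kd * bl)%:M (2 * kp * kd * bl - ki)%:M kp%:M
      ki%:M kp%:M kd%:M.

Definition Amat (n : nat) (kp ki kd : R) (a b th : 'M[R]_n) : 'M[R]_(n + n + n) :=
  mx3 0 1%:M 0
      0 0 1%:M
      (- (ki *: th)) (a - kp *: th) (b - kd *: th).

End Defs.

From HB Require Import structures.
From mathcomp Require Import all_boot all_order all_algebra.
From mathcomp Require Import classical_sets reals.
From mathcomp Require Import ring lra.
Import Order.TTheory GRing.Theory Num.Theory.
Local Open Scope ring_scope.
Set Implicit Arguments. Unset Strict Implicit. Unset Printing Implicit Defensive.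

(* P is the Kronecker product of a 3x3 matrix with I_n, and completing squares
   shows that it is positive definite.  For symmetric P,
   x^T (PA + A^T P) x = 2 <Px, Ax>.  Write x = (x1, x2, x3) and let
   z = ki x1 + kp x2 + kd x3 be the PID output; all mixed terms of <Px, Ax>
   cancel against bl |z|^2, leaving
     <z, a x2 + b x3> - (<z, th z> - bl |z|^2)
       - bl ki^2 |x1|^2 - bl (kp^2 - 2 ki kd) |x2|^2 - (bl kd^2 - kp) |x3|^2.
   The middle term is nonnegative since Sym th >= bl, and by Cauchy-Schwarz the
   first is at most (ki |x1| + kp |x2| + kd |x3|) (L1 |x2| + L2 |x3|).  The gain
   conditions force 2 L1 <= bl kd and 2 L2 <= bl kp, and then AM-GM bounds this
   cross term by the diagonal terms minus bl nu |x|^2, where nu is the least of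
   ki^2/3 and the slacks of the two gain conditions; so alpha = 2 bl nu works. *)

Section EuclideanDot.
Variables (R : realType) (m : nat).
Implicit Types (u v w x : 'cV[R]_m) (c : R).

Definition dot u v : R := (u^T *m v) 0 0.

Lemma dotE u v : dot u v = \sum_k u k 0 * v k 0.
Proof. by rewrite /dot mxE; apply: eq_bigr => k _; rewrite mxE. Qed.

Lemma dotC u v : dot u v = dot v u.
Proof. by rewrite !dotE; apply: eq_bigr => k _; rewrite mulrC. Qed.

Lemma dotDl u v w : dot (u + v) w = dot u w + dot v w.
Proof. by rewrite !dotE -big_split; apply: eq_bigr => k _; rewrite mxE mulrDl. Qed.

Lemma dotDr u v w : dot w (u + v) = dot w u + dot w v.
Proof. by rewrite dotC dotDl !(dotC w). Qed.

Lemma dotZl c u v : dot (c *: u) v = c * dot u v.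
Proof. by rewrite !dotE mulr_sumr; apply: eq_bigr => k _; rewrite mxE mulrA. Qed.

Lemma dotZr c u v : dot v (c *: u) = c * dot v u.
Proof. by rewrite dotC dotZl dotC. Qed.

Lemma dotNl u v : dot (- u) v = - dot u v.
Proof. by rewrite -scaleN1r dotZl mulN1r. Qed.

Lemma dotNr u v : dot v (- u) = - dot v u.
Proof. by rewrite dotC dotNl dotC. Qed.

Lemma dotBl u v w : dot (u - v) w = dot u w - dot v w.
Proof. by rewrite dotDl dotNl. Qed.

Lemma dotBr u v w : dot w (u - v) = dot w u - dot w v.
Proof. by rewrite dotDr dotNr. Qed.

Lemma dot0r u : dot u 0 = 0.
Proof. by rewrite -(scale0r 0) dotZr mul0r. Qed.

Lemma dot_ge0 u : 0 <= dot u u.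
Proof. by rewrite dotE; apply: sumr_ge0 => k _; rewrite -expr2 sqr_ge0. Qed.

Lemma dot_eq0 u : (dot u u == 0) = (u == 0).
Proof.
apply/idP/eqP => [|->]; last by rewrite dot0r.
rewrite dotE psumr_eq0 => [/allP u0|k _]; last by rewrite -expr2 sqr_ge0.
apply/matrixP => i j; rewrite (ord1 j) mxE.
by have /implyP/(_ isT) := u0 i (mem_index_enum i); rewrite -expr2 sqrf_eq0 => /eqP.
Qed.

Lemma dot_mulmxr (A : 'M[R]_m) u v : dot u (A *m v) = dot (A^T *m u) v.
Proof. by rewrite /dot trmx_mul trmxK mulmxA. Qed.

Lemma qformE (S : 'M[R]_m) x : qform S x = dot x (S *m x).
Proof. by rewrite /qform /dot mulmxA. Qed.

Lemma dot_sqr_le u v : dot u v ^+ 2 <= dot u u * dot v v.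
Proof.
have [/eqP|v0] := eqVneq (dot v v) 0.
  by rewrite dot_eq0 => /eqP->; rewrite !dot0r expr0n mulr0.
have vv_gt0 : 0 < dot v v by rewrite lt_def v0 dot_ge0.
have := dot_ge0 (dot v v *: u - dot u v *: v).
rewrite !(dotBl, dotBr, dotZl, dotZr) (dotC v u); nra.
Qed.

Lemma vnormE u : vnorm u = Num.sqrt (dot u u).
Proof. by rewrite /vnorm dotE; congr Num.sqrt; apply: eq_bigr => k _; rewrite expr2. Qed.

Lemma vnorm0 : vnorm (0 : 'cV[R]_m) = 0.
Proof. by rewrite vnormE dot0r sqrtr0. Qed.

Lemma vnorm_ge0 u : 0 <= vnorm u.
Proof. exact: sqrtr_ge0. Qed.

Lemma vnorm_sqr u : vnorm u ^+ 2 = dot u u.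
Proof. by rewrite vnormE sqr_sqrtr // dot_ge0. Qed.

Lemma vnorm_eq0 u : (vnorm u == 0) = (u == 0).
Proof. by rewrite vnormE sqrtr_eq0 le_eqVlt ltNge dot_ge0 orbF dot_eq0. Qed.

Lemma dot_le_vnorm u v : dot u v <= vnorm u * vnorm v.
Proof.
rewrite !vnormE -sqrtrM ?dot_ge0 //; apply: le_trans (ler_norm _) _.
by rewrite -sqrtr_sqr ler_sqrt ?mulr_ge0 ?dot_ge0 // dot_sqr_le.
Qed.

Lemma vnormZ c u : vnorm (c *: u) = `|c| * vnorm u.
Proof. by rewrite !vnormE dotZl dotZr mulrA -expr2 sqrtrM ?sqr_ge0 // sqrtr_sqr. Qed.

Lemma vnormD u v : vnorm (u + v) <= vnorm u + vnorm v.
Proof.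
rewrite -(ler_pXn2r (_ : 0 < 2)%N) ?nnegrE ?addr_ge0 ?vnorm_ge0 //.
rewrite sqrrD !vnorm_sqr dotDl !dotDr (dotC v u).
have := dot_le_vnorm u v; lra.
Qed.

End EuclideanDot.

Local Notation dot_linE := (dotDl, dotDr, dotBl, dotBr, dotZl, dotZr, dotNl, dotNr).

Section OperatorNorm.
Variables (R : realType) (m : nat) (a : 'M[R]_m).

Lemma mulmx_dot_row x i : (a *m x) i 0 = dot (row i a)^T x.
Proof. by rewrite /dot trmxK -row_mul [RHS]mxE. Qed.

Lemma vnorm_mulmx_sqr_le x :
  vnorm (a *m x) ^+ 2 <= (\sum_i dot (row i a)^T (row i a)^T) * vnorm x ^+ 2.
Proof.
rewrite !vnorm_sqr mulr_suml [dot (a *m x) _]dotE; apply: ler_sum => i _.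
by rewrite -expr2 mulmx_dot_row dot_sqr_le.
Qed.

Lemma opnorm_has_sup :
  has_sup [set vnorm (a *m x) | x in [set x : 'cV[R]_m | vnorm x <= 1]]%classic.
Proof.
split; first by exists (vnorm (a *m 0)), 0; rewrite /= ?vnorm0.
set F := \sum_i dot (row i a)^T (row i a)^T.
have F_ge0 : 0 <= F by apply: sumr_ge0 => i _; apply: dot_ge0.
exists (Num.sqrt F) => _ [x x_le1 <-].
rewrite -(ler_pXn2r (_ : 0 < 2)%N) ?nnegrE ?vnorm_ge0 ?sqrtr_ge0 // (sqr_sqrtr F_ge0).
apply: le_trans (vnorm_mulmx_sqr_le x) _.
by rewrite ler_piMr // expr_le1 ?vnorm_ge0.
Qed.

Lemma vnorm_mulmx_le x : vnorm (a *m x) <= opnorm a * vnorm x.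
Proof.
have [->|x0] := eqVneq x 0; first by rewrite mulmx0 !vnorm0 mulr0.
have nx_gt0 : 0 < vnorm x by rewrite lt_def vnorm_eq0 x0 vnorm_ge0.
have normV : `|(vnorm x)^-1| = (vnorm x)^-1 by rewrite ger0_norm // invr_ge0 ltW.
have unit_le : vnorm (a *m ((vnorm x)^-1 *: x)) <= opnorm a.
  apply: sup_upper_bound; first exact: opnorm_has_sup.
  by exists ((vnorm x)^-1 *: x); rewrite //= vnormZ normV mulVf ?gt_eqF.
rewrite -scalemxAr vnormZ normV in unit_le.
by rewrite mulrC -ler_pdivrMl // mulrC.
Qed.

End OperatorNorm.

Section QuadraticForms.
Variables (R : realType) (m : nat).

Lemma qform_sym_ge (th : 'M[R]_m) (c : R) z :
  loewner_ge (Sym th) c%:M -> c * dot z z <= dot z (th *m z).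
Proof.
move=> /(_ z); rewrite qformE mulmxBl mul_scalar_mx dotBr dotZr /Sym -scalemxAl dotZr.
by rewrite mulmxDl dotDr (dot_mulmxr th^T) trmxK (dotC (th *m z)); lra.
Qed.

Lemma qform_lyapunov (P A : 'M[R]_m) x : P^T = P ->
  qform (P *m A + A^T *m P) x = 2 * dot (P *m x) (A *m x).
Proof.
move=> Psym; rewrite qformE mulmxDl dotDr -!mulmxA (dot_mulmxr P) Psym (dot_mulmxr A^T) trmxK.
by rewrite (dotC (A *m x)) mulr2n mulrDl mul1r.
Qed.

End QuadraticForms.

Section ThreeByThreeBlocks.
Variables (R : realType) (n : nat).

Definition col3 (x1 x2 x3 : 'cV[R]_n) : 'cV[R]_(n + n + n) := col_mx (col_mx x1 x2) x3.

Lemma col3P (x : 'cV[R]_(n + n + n)) : exists x1 x2 x3, x = col3 x1 x2 x3.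
Proof. by exists (usubmx (usubmx x)), (dsubmx (usubmx x)), (dsubmx x); rewrite /col3 !vsubmxK. Qed.

Lemma col3_eq0 (x1 x2 x3 : 'cV[R]_n) : (col3 x1 x2 x3 == 0) = [&& x1 == 0, x2 == 0 & x3 == 0].
Proof. by rewrite /col3 !col_mx_eq0 andbA. Qed.

Lemma mx3_mulcol3 (A11 A12 A13 A21 A22 A23 A31 A32 A33 : 'M[R]_n) (x1 x2 x3 : 'cV[R]_n) :
  mx3 A11 A12 A13 A21 A22 A23 A31 A32 A33 *m col3 x1 x2 x3 =
  col3 (A11 *m x1 + A12 *m x2 + A13 *m x3) (A21 *m x1 + A22 *m x2 + A23 *m x3)
       (A31 *m x1 + A32 *m x2 + A33 *m x3).
Proof. by rewrite /mx3 /col3 !mul_block_col mul_col_mx mul_row_col add_col_mx. Qed.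

Lemma tr_mx3 (A11 A12 A13 A21 A22 A23 A31 A32 A33 : 'M[R]_n) :
  (mx3 A11 A12 A13 A21 A22 A23 A31 A32 A33)^T =
  mx3 A11^T A21^T A31^T A12^T A22^T A32^T A13^T A23^T A33^T.
Proof. by rewrite /mx3 !tr_block_mx tr_col_mx tr_row_mx. Qed.

Lemma dot_col3 (x1 x2 x3 y1 y2 y3 : 'cV[R]_n) :
  dot (col3 x1 x2 x3) (col3 y1 y2 y3) = dot x1 y1 + dot x2 y2 + dot x3 y3.
Proof.
have dot_col_mx m1 m2 (u1 v1 : 'cV[R]_m1) (u2 v2 : 'cV[R]_m2) :
    dot (col_mx u1 u2) (col_mx v1 v2) = dot u1 v1 + dot u2 v2.
  by rewrite /dot tr_col_mx mul_row_col mxE.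
by rewrite /col3 !dot_col_mx.
Qed.

End ThreeByThreeBlocks.

Section ScalarBounds.
Variable R : realFieldType.

Lemma double_le_of_le_sqr (l p d : R) : 0 < p -> 0 < d -> 0 <= l ->
  l * (p + d) <= p ^+ 2 -> l * (p + d) <= d ^+ 2 -> 2 * l <= p.
Proof.
move=> p_gt0 d_gt0 l_ge0 le_p le_d; have [pd|dp] := lerP p d; nra.
Qed.

Lemma cross_term_le (i p d l1 l2 s1 s2 s3 : R) :
  0 <= p -> 0 <= d -> 0 <= l1 -> 0 <= l2 -> 2 * l1 <= d -> 2 * l2 <= p ->
  (i * s1 + p * s2 + d * s3) * (l1 * s2 + l2 * s3)
    <= 2 / 3 * (i * s1) ^+ 2 + (l1 + l2) * (p + d) * (s2 ^+ 2 + s3 ^+ 2).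
Proof.
move=> p_ge0 d_ge0 l1_ge0 l2_ge0 l1_le l2_le.
have wsqr_ge0 (x y s : R) : 0 <= x -> 0 <= y -> 0 <= x * y * s ^+ 2.
  by move=> x_ge0 y_ge0; apply: mulr_ge0; [exact: mulr_ge0 | exact: sqr_ge0].
(* AM-GM: i l1 s1 s2 <= (i s1)^2 / 3 + 3/4 (l1 s2)^2, and 3/4 l1^2 <= 3/8 l1 d. *)
have := sqr_ge0 (2 * i * s1 - 3 * l1 * s2); have := sqr_ge0 (2 * i * s1 - 3 * l2 * s3).
have := wsqr_ge0 _ _ (s2 - s3) (addr_ge0 (mulr_ge0 p_ge0 l2_ge0) (mulr_ge0 d_ge0 l1_ge0)) ler01.
have gap1 : 0 <= d - 2 * l1 by rewrite subr_ge0.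
have gap2 : 0 <= p - 2 * l2 by rewrite subr_ge0.
have := wsqr_ge0 _ _ s2 l1_ge0 gap1; have := wsqr_ge0 _ _ s3 l2_ge0 gap2.
have := wsqr_ge0 _ _ s2 d_ge0 l1_ge0; have := wsqr_ge0 _ _ s2 p_ge0 l2_ge0.
have := wsqr_ge0 _ _ s2 d_ge0 l2_ge0; have := wsqr_ge0 _ _ s3 p_ge0 l1_ge0.
have := wsqr_ge0 _ _ s3 d_ge0 l1_ge0; have := wsqr_ge0 _ _ s3 p_ge0 l2_ge0.
lra.
Qed.

Lemma pid_quadratic_bound (i p d q l1 l2 nu s1 s2 s3 : R) :
  0 <= i -> 0 < p -> 0 < d -> 0 <= q -> 0 <= l1 -> 0 <= l2 -> 0 <= nu ->
  nu <= i ^+ 2 / 3 -> nu <= p ^+ 2 - 2 * i * d - (l1 + l2) * (p + d) ->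
  nu <= d ^+ 2 - q - (l1 + l2) * (p + d) ->
  (i * s1 + p * s2 + d * s3) * (l1 * s2 + l2 * s3) + nu * (s1 ^+ 2 + s2 ^+ 2 + s3 ^+ 2)
    <= i ^+ 2 * s1 ^+ 2 + (p ^+ 2 - 2 * i * d) * s2 ^+ 2 + (d ^+ 2 - q) * s3 ^+ 2.
Proof.
move=> i_ge0 p_gt0 d_gt0 q_ge0 l1_ge0 l2_ge0 nu_ge0 nu_i nu_p nu_d.
have id_ge0 : 0 <= i * d by rewrite mulr_ge0 // ltW.
have pd_ge0 : 0 <= p + d by rewrite addr_ge0 // ltW.
have l1_pd : l1 * (p + d) <= (l1 + l2) * (p + d) by rewrite ler_wpM2r // lerDl.
have l2_pd : l2 * (p + d) <= (l1 + l2) * (p + d) by rewrite ler_wpM2r // lerDr.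
have l1_le : 2 * l1 <= d by apply: (double_le_of_le_sqr (d := p)); rewrite // addrC; lra.
have l2_le : 2 * l2 <= p by apply: (double_le_of_le_sqr (d := d)); lra.
have := cross_term_le i s1 s2 s3 (ltW p_gt0) (ltW d_gt0) l1_ge0 l2_ge0 l1_le l2_le.
have := ler_wpM2r (sqr_ge0 s1) nu_i; have := ler_wpM2r (sqr_ge0 s2) nu_p.
have := ler_wpM2r (sqr_ge0 s3) nu_d.
lra.
Qed.

Lemma Pmat_pivots_gt0 (bl kp ki kd : R) : 0 < bl -> 0 < kp -> 0 < ki -> 0 < kd ->
  2 * ki * kd < kp ^+ 2 -> kp < bl * kd ^+ 2 ->
  0 < 2 * kp * kd * bl - ki /\
  0 < 4 * bl ^+ 2 * kd ^+ 2 * (kp ^+ 2 - ki * kd) - 2 * kp ^+ 3 * bl + ki ^+ 2.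
Proof.
move=> bl_gt0 kp_gt0 ki_gt0 kd_gt0 kp_large kd_large.
split; first by rewrite subr_gt0; have := mulr_gt0 kd_gt0 kp_gt0; nra.
have : 2 * kp ^+ 2 * bl * kp < 2 * kp ^+ 2 * bl * (bl * kd ^+ 2).
  by rewrite ltr_pM2l // !mulr_gt0 // exprn_gt0.
have : 0 < bl ^+ 2 * kd ^+ 2 * (kp ^+ 2 - 2 * ki * kd).
  by rewrite !mulr_gt0 ?exprn_gt0 // subr_gt0.
have : 0 < ki ^+ 2 by rewrite exprn_gt0.
nra.
Qed.

End ScalarBounds.

Section PIDBlocks.
Variables (R : realType) (n : nat) (kp ki kd bl : R).

Definition pid_output (x1 x2 x3 : 'cV[R]_n) := ki *: x1 + kp *: x2 + kd *: x3.

Lemma tr_Pmat : (Pmat n kp ki kd bl)^T = Pmat n kp ki kd bl.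
Proof. by rewrite /Pmat tr_mx3 !tr_scalar_mx. Qed.

Lemma Pmat_mulcol3 (x1 x2 x3 : 'cV[R]_n) :
  Pmat n kp ki kd bl *m col3 x1 x2 x3 =
  col3 ((2 * ki * kp * bl) *: x1 + (2 * ki * kd * bl) *: x2 + ki *: x3)
       ((2 * ki * kd * bl) *: x1 + (2 * kp * kd * bl - ki) *: x2 + kp *: x3)
       (pid_output x1 x2 x3).
Proof. by rewrite /Pmat mx3_mulcol3 !mul_scalar_mx. Qed.

Lemma Amat_mulcol3 (a b th : 'M[R]_n) (x1 x2 x3 : 'cV[R]_n) :
  Amat kp ki kd a b th *m col3 x1 x2 x3 =
  col3 x2 x3 (a *m x2 + b *m x3 - th *m pid_output x1 x2 x3).
Proof.
rewrite /Amat mx3_mulcol3 !mul0mx !mul_scalar_mx !scale1r !add0r addr0 /pid_output.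
rewrite mulNmx !mulmxBl !mulmxDr -!scalemxAl -!scalemxAr; congr col3.
by apply/matrixP => i j; rewrite !mxE; ring.
Qed.

Lemma Pmat_posdef : 0 < bl -> 0 < kp -> 0 < ki -> 0 < kd ->
  2 * ki * kd < kp ^+ 2 -> kp < bl * kd ^+ 2 -> posdef (Pmat n kp ki kd bl).
Proof.
move=> bl_gt0 kp_gt0 ki_gt0 kd_gt0 kp_large kd_large; split; first exact: tr_Pmat.
move=> x; have [x1 [x2 [x3 ->]]] := col3P x; rewrite col3_eq0 => x_neq0.
rewrite qformE Pmat_mulcol3 dot_col3 /pid_output.
(* Complete the square in x3 (w1 below), then in x1 (w2); the coefficient left
   on |x2|^2 is a Schur complement. *)
set aa := ki * (2 * kp * kd * bl - ki).
set ee := ki * (2 * kd ^+ 2 * bl - kp).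
set cc := 2 * kp * kd ^+ 2 * bl - ki * kd - kp ^+ 2.
have [pivot1_gt0 pivot2_gt0] := Pmat_pivots_gt0 bl_gt0 kp_gt0 ki_gt0 kd_gt0 kp_large kd_large.
have aa_gt0 : 0 < aa by rewrite mulr_gt0.
have schur_gt0 : 0 < aa * cc - ee ^+ 2.
  have -> : aa * cc - ee ^+ 2 = ki * kd *
      (4 * bl ^+ 2 * kd ^+ 2 * (kp ^+ 2 - ki * kd) - 2 * kp ^+ 3 * bl + ki ^+ 2).
    by rewrite /aa /cc /ee; ring.
  by rewrite !mulr_gt0.
set w1 := ki *: x1 + kp *: x2 + kd *: x3.
set w2 := aa *: x1 + ee *: x2.
have completed_squares : aa * kd *
  (dot x1 (2 * ki * kp * bl *: x1 + 2 * ki * kd * bl *: x2 + ki *: x3) +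
   dot x2 (2 * ki * kd * bl *: x1 + (2 * kp * kd * bl - ki) *: x2 + kp *: x3) +
   dot x3 w1) = aa * dot w1 w1 + dot w2 w2 + (aa * cc - ee ^+ 2) * dot x2 x2.
  rewrite /w1 /w2 !dot_linE (dotC x2 x1) (dotC x3 x1) (dotC x3 x2) /aa /cc /ee; ring.
rewrite -(pmulr_rgt0 _ (mulr_gt0 aa_gt0 kd_gt0)) completed_squares ltNge.
apply: contra x_neq0 => le0.
have w1_ge0 := dot_ge0 w1; have w2_ge0 := dot_ge0 w2; have x2_ge0 := dot_ge0 x2.
have x2_0 : x2 == 0 by rewrite -dot_eq0 eq_le dot_ge0 andbT; nra.
have w2_0 : w2 == 0 by rewrite -dot_eq0 eq_le dot_ge0 andbT; nra.
have w1_0 : w1 == 0 by rewrite -dot_eq0 eq_le dot_ge0 andbT; nra.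
move: w2_0; rewrite /w2 (eqP x2_0) scaler0 addr0 scaler_eq0 gt_eqF //= => x1_0.
move: w1_0; rewrite /w1 (eqP x1_0) (eqP x2_0) !scaler0 !add0r scaler_eq0 gt_eqF //= => x3_0.
by rewrite x3_0 !eqxx.
Qed.

Lemma dot_Pmat_Amat (a b th : 'M[R]_n) (x1 x2 x3 : 'cV[R]_n) :
  let x := col3 x1 x2 x3 in let z := pid_output x1 x2 x3 in
  dot (Pmat n kp ki kd bl *m x) (Amat kp ki kd a b th *m x) =
  dot z (a *m x2 + b *m x3) - (dot z (th *m z) - bl * dot z z)
  - (bl * ki ^+ 2 * dot x1 x1 + bl * (kp ^+ 2 - 2 * ki * kd) * dot x2 x2
     + (bl * kd ^+ 2 - kp) * dot x3 x3).
Proof.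
rewrite /= Pmat_mulcol3 Amat_mulcol3 dot_col3 dotBr /pid_output !dot_linE.
rewrite (dotC x2 x1) (dotC x3 x1) (dotC x3 x2); ring.
Qed.

End PIDBlocks.

Lemma vnorm_pid_output_le (R : realType) n (kp ki kd : R) (x1 x2 x3 : 'cV[R]_n) :
  0 <= kp -> 0 <= ki -> 0 <= kd ->
  vnorm (pid_output kp ki kd x1 x2 x3) <= ki * vnorm x1 + kp * vnorm x2 + kd * vnorm x3.
Proof.
move=> kp_ge0 ki_ge0 kd_ge0; rewrite /pid_output.
apply: le_trans (vnormD _ _) _; rewrite vnormZ ger0_norm // lerD2r.
by apply: le_trans (vnormD _ _) _; rewrite !vnormZ !ger0_norm.
Qed.

Lemma dot_Pmat_Amat_le (R : realType) n (L1 L2 bl kp ki kd : R) (a b th : 'M[R]_n)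
    (x1 x2 x3 : 'cV[R]_n) :
  0 <= L1 -> 0 <= L2 -> 0 <= kp -> 0 <= ki -> 0 <= kd ->
  opnorm a <= L1 -> opnorm b <= L2 -> loewner_ge (Sym th) bl%:M ->
  dot (Pmat n kp ki kd bl *m col3 x1 x2 x3) (Amat kp ki kd a b th *m col3 x1 x2 x3) <=
  (ki * vnorm x1 + kp * vnorm x2 + kd * vnorm x3) * (L1 * vnorm x2 + L2 * vnorm x3)
  - (bl * ki ^+ 2 * vnorm x1 ^+ 2 + bl * (kp ^+ 2 - 2 * ki * kd) * vnorm x2 ^+ 2
     + (bl * kd ^+ 2 - kp) * vnorm x3 ^+ 2).
Proof.
move=> L1_ge0 L2_ge0 kp_ge0 ki_ge0 kd_ge0 a_le b_le th_ge.
rewrite dot_Pmat_Amat /= -!vnorm_sqr.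
set z := pid_output kp ki kd x1 x2 x3.
have th_z := qform_sym_ge z th_ge; rewrite -vnorm_sqr in th_z.
have Lx_ge0 : 0 <= L1 * vnorm x2 + L2 * vnorm x3 by rewrite addr_ge0 ?mulr_ge0 ?vnorm_ge0.
have az_le : dot z (a *m x2 + b *m x3) <= vnorm z * (L1 * vnorm x2 + L2 * vnorm x3).
  apply: le_trans (dot_le_vnorm _ _) _; rewrite ler_wpM2l ?vnorm_ge0 //.
  apply: le_trans (vnormD _ _) _; apply: lerD; apply: le_trans (vnorm_mulmx_le _ _) _;
    by rewrite ler_wpM2r ?vnorm_ge0.
have := ler_wpM2r Lx_ge0 (vnorm_pid_output_le x1 x2 x3 kp_ge0 ki_ge0 kd_ge0).
rewrite -/z; lra.
Qed.

Lemma Amat_lyapunov (R : realType) n (L1 L2 bl kp ki kd nu : R) (a b th : 'M[R]_n) :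
  0 < bl -> 0 < kp -> 0 < ki -> 0 < kd -> 0 <= L1 -> 0 <= L2 -> 0 <= nu ->
  nu <= ki ^+ 2 / 3 -> nu <= kp ^+ 2 - 2 * ki * kd - kbar L1 L2 bl kp kd ->
  nu <= kd ^+ 2 - kp / bl - kbar L1 L2 bl kp kd ->
  opnorm a <= L1 -> opnorm b <= L2 -> loewner_ge (Sym th) bl%:M ->
  let P := Pmat n kp ki kd bl in let A := Amat kp ki kd a b th in
  loewner_ge (- (2 * bl * nu)%:M) (P *m A + A^T *m P).
Proof.
move=> bl_gt0 kp_gt0 ki_gt0 kd_gt0 L1_ge0 L2_ge0 nu_ge0 nu_i nu_p nu_d a_le b_le th_ge P A x.
have [x1 [x2 [x3 ->]]] := col3P x.
have PA_le := dot_Pmat_Amat_le x1 x2 x3 L1_ge0 L2_ge0 (ltW kp_gt0) (ltW ki_gt0) (ltW kd_gt0)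
  a_le b_le th_ge.
rewrite qformE mulmxBl dotBr -(qformE (P *m A + A^T *m P)) qform_lyapunov ?tr_Pmat //.
rewrite mulNmx mul_scalar_mx dotNr dotZr dot_col3 -!vnorm_sqr.
have bl_ge0 := ltW bl_gt0.
have normalize L : 0 <= L -> exists2 l, L = bl * l & 0 <= l.
  move=> L_ge0; exists (L / bl); first by rewrite mulrC divfK ?gt_eqF.
  exact: divr_ge0.
have [[l1 eL1 l1_ge0] [l2 eL2 l2_ge0]] := (normalize _ L1_ge0, normalize _ L2_ge0).
subst L1 L2; have kbarE : kbar (bl * l1) (bl * l2) bl kp kd = (l1 + l2) * (kp + kd).
  by rewrite /kbar; field; rewrite gt_eqF.
rewrite kbarE in nu_p nu_d.
have := ler_wpM2l bl_ge0 (pid_quadratic_bound (vnorm x1) (vnorm x2) (vnorm x3)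
  (ltW ki_gt0) kp_gt0 kd_gt0 (divr_ge0 (ltW kp_gt0) bl_ge0) l1_ge0 l2_ge0 nu_ge0 nu_i nu_p nu_d).
have : bl * (kp / bl) * vnorm x3 ^+ 2 = kp * vnorm x3 ^+ 2 by rewrite [bl * _]mulrC divfK ?gt_eqF.
lra.
Qed.

Unset Implicit Arguments.
Theorem proposition4p2 (R : realType) (L1 L2 bl kp ki kd : R) :
  0 < L1 -> 0 < L2 -> 0 < bl -> 0 < kp -> 0 < ki -> 0 < kd ->
  kp ^+ 2 > 2 * ki * kd + kbar L1 L2 bl kp kd ->
  kd ^+ 2 > kp / bl + kbar L1 L2 bl kp kd ->
  (forall n : nat, (1 <= n)%N -> posdef (Pmat n kp ki kd bl)) /\
  exists alpha : R, 0 < alpha /\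
    forall n : nat, (1 <= n)%N ->
    forall a b th : 'M[R]_n,
      opnorm a <= L1 -> opnorm b <= L2 -> loewner_ge (Sym th) (bl%:M) ->
      let P := Pmat n kp ki kd bl in
      let A := Amat kp ki kd a b th in
      loewner_ge (- (alpha%:M)) (P *m A + A^T *m P).
Proof.
move=> L1_gt0 L2_gt0 bl_gt0 kp_gt0 ki_gt0 kd_gt0 kp_large kd_large.
have kbar_ge0 : 0 <= kbar L1 L2 bl kp kd.
  by rewrite divr_ge0 ?mulr_ge0 ?addr_ge0 // ltW.
split => [n _|].
  apply: Pmat_posdef => //; first lra.
  by rewrite -ltr_pdivrMl // mulrC; lra.
pose nu := Num.min (ki ^+ 2 / 3)
  (Num.min (kp ^+ 2 - 2 * ki * kd - kbar L1 L2 bl kp kd) (kd ^+ 2 - kp / bl - kbar L1 L2 bl kp kd)).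
have nu_gt0 : 0 < nu by rewrite !lt_min divr_gt0 ?exprn_gt0 //= !subr_gt0 -?addrA; lra.
exists (2 * bl * nu); split; first by rewrite !mulr_gt0.
move=> n _ a b th a_le b_le th_ge.
apply: (Amat_lyapunov _ _ _ _ (ltW L1_gt0) (ltW L2_gt0) (ltW nu_gt0)) a_le b_le th_ge => //;
  by rewrite /nu !ge_min lexx ?orbT.
Qed.
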